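(* The subsumption relation $\sqsubseteq$ on models over a fixed signature ($M\sqsubseteq M'$ iff there is a homomorphism $M\to M'$) is reflexive and transitive, and it is antisymmetric up to isomorphism: if $M\sqsubseteq M'$ and $M'\sqsubseteq M$ then $M$ and $M'$ are isomorphic. Hence $\sqsubseteq$ induces a partial order on isomorphism classes of models.
   Context: Signature: finite set of types $\mathsf{TYPE}$, finite set of attributes $\mathsf{ATTR}$, relation symbols $\mathsf{REL}=\bigcup_{m>1}\mathsf{REL}_m$, a set $\mathsf{NNAME}$ of base-labels, a set $\mathsf{NVAR}$ of node variables and a set $\mathsf{WVAR}$ of wrapping variables (pairwise disjoint); node labels are $\mathsf{NLABEL}=\mathsf{NNAME}\uplus\mathsf{NVAR}$. A Feature Structure with Wrappings (FSW) is $F=\langle V,\mathcal W,\mathcal I\rangle$ where $V$ is a nonempty set of nodes, $\mathcal W$ is a set of pairwise disjoint nonempty subsets of $V$ (the wrappings, with $\mathcal W\cap V=\emptyset$), and $\mathcal I$ maps each type $t$ to a subset $\mathcal I(t)\subseteq V$, each attribute $\mathsf P$ to a partial function $\mathcal I(\mathsf P)$ from $V$ to $V\cup\mathcal W$, each $m$-ary relation symbol $r$ to a subset of $(V\cup\mathcal W)^m$, and is a partial map from $\mathsf{NNAME}$ to $V$. The w-sets are the elements of $\hat{\mathcal W}=\mathcal W\cup\{V\setminus\bigcup\mathcal W\}$, a partition of $V$; $[v]$ denotes the w-set containing $v$. A model is $M=\langle F,g\rangle$ with $g=\langle g_N,g_W\rangle$, $g_N:\mathsf{NVAR}\rightharpoonup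 V$, $g_W:\mathsf{WVAR}\rightharpoonup\mathcal W$. Write $\mathcal I_g(b)=\mathcal I(b)$ for base-labels, $\mathcal I_g(x)=g_N(x)$, $\mathcal I_g(T)=g_W(T)$, and $\mathcal I_g(k,\varepsilon)=\mathcal I_g(k)$, $\mathcal I_g(k,p\mathsf Q)=\mathcal I(\mathsf Q)(\mathcal I_g(k,p))$ for attribute words $p\in\mathsf{ATTR}^*$ (partial). Models are required to satisfy: (reachability) for every $v\in V$ there are $k\in\mathsf{NLABEL}$ and $p\in\mathsf{ATTR}^*$ with $\mathcal I_g(k)\in[v]$ and $\mathcal I_g(k,p)=v$; (non-escapability) for every $W\in\mathcal W$, $v\in W$ and $p\in\mathsf{ATTR}^*$, if $\mathcal I(p)(v)$ is defined then it lies in $[v]$. A homomorphism $h:M\to M'$ is a pair $h_V:V\to V'\uplus\mathcal W'$, $h_{\mathcal W}:\mathcal W\to\mathcal W'$ such that, writing $h$ for both (and extending it to $V\cup\mathcal W$): $h(\mathcal I(t))\subseteq\mathcal I'(t)$ for all types; if $\mathcal I(\mathsf P)(v)$ is defined then $\mathcal I'(\mathsf P)(h(v))$ is defined and equals $h(\mathcal I(\mathsf P)(v))$; $h(\mathcal I(r))\subseteq\mathcal I'(r)$ for all relations; if $\mathcal I(b)$ is defined then $h(\mathcal I(b))=\mathcal I'(b)$; if $v\in W\in\mathcal W$ then $h_V(v)\in h_{\mathcal W}(W)$; if $g(x)$ is defined (for $x\in\mathsf{NVAR}\uplus\mathsf{WVAR}$) then $h(g(x))=g'(x)$. An isomorphism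 $\sigma:M\to M'$ is a homomorphism with $\sigma_V(V)\subseteq V'$, such that $\sigma_V:V\to V'$ and $\sigma_{\mathcal W}:\mathcal W\to\mathcal W'$ are bijections and $\sigma^{-1}=\langle\sigma_V^{-1},\sigma_{\mathcal W}^{-1}\rangle$ is a homomorphism $M'\to M$. *)

From Stdlib Require Import List.
Import ListNotations.
Set Implicit Arguments.

(* A signature: finite TYPE and ATTR, relation symbols of each arity m > 1,
   base-labels, node variables and wrapping variables (pairwise disjoint
   because they are distinct types). *)
Record Signature := {
  TYPE : Type;
  ATTR : Type;
  REL : nat -> Type;
  NNAME : Type;
  NVAR : Type;
  WVAR : Type;
  TYPE_finite : exists l : list TYPE, forall t, In t l;
  ATTR_finite : exists l : list ATTR, forall a, In a l;
  REL_arity : forall m, REL m -> 1 < m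
}.

Definition NLABEL (S : Signature) : Type := (NNAME S + NVAR S)%type.

(* The node set V is the carrier type
   [node]; wrappings are the elements of the type [wrap], each denoting the
   subset [fun v => inw v w] of V.  Elements of V u W are [node + wrap]. *)
Record Model (S : Signature) := {
  node : Type;
  wrap : Type;
  inw : node -> wrap -> Prop;
  node_nonempty : inhabited node;
  wrap_nonempty : forall w, exists v, inw v w;
  wrap_disjoint : forall v w1 w2, inw v w1 -> inw v w2 -> w1 = w2;
  Ity : TYPE S -> node -> Prop;
  Iattr : ATTR S -> node -> option (node + wrap);
  Irel : forall m, REL S m -> list (node + wrap) -> Prop;
  Irel_len : forall m (r : REL S m) l, Irel m r l -> length l = m;
  Ibase : NNAME S -> option node;
  gN : NVAR S -> option node;
  gW : WVAR S -> option wrap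
}.

Arguments node {S} _.
Arguments wrap {S} _.
Arguments inw {S} _ _ _.
Arguments Ity {S} _ _ _.
Arguments Iattr {S} _ _ _.
Arguments Irel {S} _ {m} _ _.
Arguments Ibase {S} _ _.
Arguments gN {S} _ _.
Arguments gW {S} _ _.

Section Semantics.
Variable S : Signature.
Variable M : Model S.

Definition Ipath_from (x : node M + wrap M) (p : list (ATTR S))
  : option (node M + wrap M) :=
  fold_left (fun acc Q => match acc with
                          | Some (inl v) => Iattr M Q v
                          | _ => None end) p (Some x).

Definition Ilabel (k : NLABEL S) : option (node M) :=
  match k with inl b => Ibase M b | inr x => gN M x end.

Definition Ilabel_path (k : NLABEL S) (p : list (ATTR S))
  : option (node M + wrap M) :=
  match Ilabel k with Some v => Ipath_from (inl v) p | None => None end.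

(* u and v lie in the same w-set (the w-sets partition V: the wrappings and
   the set of nodes in no wrapping) *)
Definition same_wset (u v : node M) : Prop :=
  (exists w, inw M u w /\ inw M v w) \/
  ((forall w, ~ inw M u w) /\ (forall w, ~ inw M v w)).

Definition reachable : Prop :=
  forall v : node M, exists (k : NLABEL S) (p : list (ATTR S)) (u : node M),
    Ilabel k = Some u /\ same_wset u v /\ Ilabel_path k p = Some (inl v).

Definition non_escapable : Prop :=
  forall (w : wrap M) (v : node M) (p : list (ATTR S)) x,
    inw M v w -> Ipath_from (inl v) p = Some x ->
    exists u, x = inl u /\ inw M u w.

Definition wf_model : Prop := reachable /\ non_escapable.
End Semantics.

Arguments wf_model {S} _.

Definition hext {S} {M M' : Model S} (hV : node M -> node M' + wrap M')
  (hW : wrap M -> wrap M') (x : node M + wrap M) : node M' + wrap M' :=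
  match x with inl v => hV v | inr w => inr (hW w) end.

Definition is_hom {S} (M M' : Model S) (hV : node M -> node M' + wrap M')
  (hW : wrap M -> wrap M') : Prop :=
  (forall t v, Ity M t v -> exists u, hV v = inl u /\ Ity M' t u) /\
  (forall P v x, Iattr M P v = Some x ->
     exists u, hV v = inl u /\ Iattr M' P u = Some (hext hV hW x)) /\
  (forall m (r : REL S m) l, Irel M r l -> Irel M' r (map (hext hV hW) l)) /\
  (forall b v, Ibase M b = Some v -> exists u, hV v = inl u /\ Ibase M' b = Some u) /\
  (forall v w, inw M v w -> exists u, hV v = inl u /\ inw M' u (hW w)) /\
  (forall x v, gN M x = Some v -> exists u, hV v = inl u /\ gN M' x = Some u) /\
  (forall T w, gW M T = Some w -> gW M' T = Some (hW w)).

Definition subsumes {S} (M M' : Model S) : Prop :=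
  exists hV hW, is_hom M M' hV hW.

Definition isomorphic {S} (M M' : Model S) : Prop :=
  exists (f : node M -> node M') (g : node M' -> node M)
         (fW : wrap M -> wrap M') (gW : wrap M' -> wrap M),
    (forall v, g (f v) = v) /\ (forall v', f (g v') = v') /\
    (forall w, gW (fW w) = w) /\ (forall w', fW (gW w') = w') /\
    is_hom M M' (fun v => inl (f v)) fW /\
    is_hom M' M (fun v' => inl (g v')) gW.

(* A homomorphism maps the value of every labelled attribute path to the value
   of the same labelled path, and it fixes the labels themselves.  In a
   reachable model every node is such a value, so an endomorphism is the
   identity on nodes, and then also on wrappings since these are nonempty and
   pairwise disjoint.  Given homomorphisms both ways between reachable models,
   both composites are therefore identities, which makes the two
   homomorphisms mutually inverse isomorphisms. *)
From Stdlib Require Import List.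
Set Implicit Arguments.

Section Homomorphisms.
Variable S : Signature.

Lemma fold_Iattr_None (M : Model S) p :
  fold_left (fun acc Q => match acc with
                          | Some (inl v) => Iattr M Q v
                          | _ => None end) p (@None (node M + wrap M)) = None.
Proof. induction p; simpl; auto. Qed.

Lemma hom_Ipath_from (M M' : Model S) hV hW : is_hom M M' hV hW ->
  forall p x y, Ipath_from M x p = Some y ->
  Ipath_from M' (hext hV hW x) p = Some (hext hV hW y).
Proof.
  intros [_ [Hattr _]] p; induction p as [|P p IH]; intros x y Hxy.
  - injection Hxy as <-; reflexivity.
  - unfold Ipath_from in Hxy |- *; simpl in Hxy |- *.
    destruct x as [v|w]; [|now rewrite fold_Iattr_None in Hxy].
    destruct (Iattr M P v) as [z|] eqn:Hz; [|now rewrite fold_Iattr_None in Hxy].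
    destruct (Hattr _ _ _ Hz) as [u [Hv Hu]].
    simpl; rewrite Hv, Hu.
    exact (IH _ _ Hxy).
Qed.

Lemma hom_Ilabel (M M' : Model S) hV hW : is_hom M M' hV hW ->
  forall k v, Ilabel M k = Some v ->
  exists u, hV v = inl u /\ Ilabel M' k = Some u.
Proof.
  intros [_ [_ [_ [Hbase [_ [HgN _]]]]]] [b|x] v; simpl; auto.
Qed.

Lemma hom_Ilabel_path (M M' : Model S) hV hW : is_hom M M' hV hW ->
  forall k p y, Ilabel_path M k p = Some y ->
  Ilabel_path M' k p = Some (hext hV hW y).
Proof.
  intros Hh k p y; unfold Ilabel_path.
  destruct (Ilabel M k) as [v|] eqn:Hk; [|discriminate].
  destruct (hom_Ilabel Hh _ Hk) as [u [Hv Hu]].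
  rewrite Hu; intros Hp.
  rewrite <- Hv; change (hV v) with (hext hV hW (inl v)).
  exact (hom_Ipath_from Hh _ _ Hp).
Qed.

Lemma is_hom_ext (M M' : Model S) hV hV' hW :
  (forall v, hV v = hV' v) -> is_hom M M' hV hW -> is_hom M M' hV' hW.
Proof.
  intros E [H1 [H2 [H3 [H4 [H5 [H6 H7]]]]]].
  assert (Eext : forall x, hext hV hW x = hext hV' hW x)
    by (intros [v|w]; simpl; auto).
  repeat split; intros; rewrite <- ?E.
  - auto.
  - rewrite <- Eext; auto.
  - rewrite <- (map_ext _ _ Eext); auto.
  - auto.
  - auto.
  - auto.
  - auto.
Qed.

Lemma hom_id (M : Model S) : is_hom M M (fun v => inl v) (fun w => w).
Proof.
  assert (Eid : forall x, hext (M := M) (M' := M) (fun v => inl v) (fun w => w) x = x)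
    by (intros [v|w]; reflexivity).
  repeat split; intros; eauto.
  - rewrite Eid; eauto.
  - rewrite (map_ext _ _ Eid), map_id; auto.
Qed.

Lemma hom_comp (M1 M2 M3 : Model S) h1 g1 h2 g2 :
  is_hom M1 M2 h1 g1 -> is_hom M2 M3 h2 g2 ->
  is_hom M1 M3 (fun v => hext h2 g2 (h1 v)) (fun w => g2 (g1 w)).
Proof.
  intros [A1 [A2 [A3 [A4 [A5 [A6 A7]]]]]] [B1 [B2 [B3 [B4 [B5 [B6 B7]]]]]].
  assert (Ecomp : forall x, hext (fun v => hext h2 g2 (h1 v)) (fun w => g2 (g1 w)) x
                            = hext h2 g2 (hext h1 g1 x))
    by (intros [v|w]; reflexivity).
  repeat split; intros.
  - destruct (A1 _ _ H) as [u [-> Hu]]; simpl; eauto.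
  - destruct (A2 _ _ _ H) as [u [-> Hu]]; simpl.
    rewrite Ecomp; eauto.
  - rewrite (map_ext _ _ Ecomp), <- map_map; auto.
  - destruct (A4 _ _ H) as [u [-> Hu]]; simpl; eauto.
  - destruct (A5 _ _ H) as [u [-> Hu]]; simpl; eauto.
  - destruct (A6 _ _ H) as [u [-> Hu]]; simpl; eauto.
  - auto.
Qed.

Lemma reachable_endo_node_id (M : Model S) hV hW :
  reachable M -> is_hom M M hV hW -> forall v, hV v = inl v.
Proof.
  intros Hreach Hh v.
  destruct (Hreach v) as [k [p [_ [_ [_ Hp]]]]].
  pose proof (hom_Ilabel_path Hh _ _ Hp) as Himg.
  rewrite Hp in Himg; injection Himg; auto.
Qed.

Lemma endo_node_id_wrap_id (M : Model S) hV hW :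
  is_hom M M hV hW -> (forall v, hV v = inl v) -> forall w, hW w = w.
Proof.
  intros [_ [_ [_ [_ [Hinw _]]]]] Hid w.
  destruct (wrap_nonempty M w) as [v Hv].
  destruct (Hinw _ _ Hv) as [u [Hvu Hu]].
  rewrite Hid in Hvu; injection Hvu as <-.
  exact (wrap_disjoint M _ _ _ Hu Hv).
Qed.

Lemma subsumes_refl (M : Model S) : subsumes M M.
Proof. exists (fun v => inl v), (fun w => w); apply hom_id. Qed.

Lemma subsumes_trans (M1 M2 M3 : Model S) :
  subsumes M1 M2 -> subsumes M2 M3 -> subsumes M1 M3.
Proof.
  intros [h1 [g1 H1]] [h2 [g2 H2]].
  eexists; eexists; exact (hom_comp H1 H2).
Qed.

Lemma isomorphic_subsumes (M M' : Model S) :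
  isomorphic M M' -> subsumes M M' /\ subsumes M' M.
Proof.
  intros [f [g [fW [gW [_ [_ [_ [_ [Hf Hg]]]]]]]]].
  split; eexists; eexists; eauto.
Qed.

Lemma subsumes_antisym (M M' : Model S) : reachable M -> reachable M' ->
  subsumes M M' -> subsumes M' M -> isomorphic M M'.
Proof.
  intros R R' [h [hW H]] [h' [hW' H']].
  pose proof (hom_comp H H') as HH'; pose proof (hom_comp H' H) as H'H.
  pose proof (reachable_endo_node_id R HH') as Eh'h.
  pose proof (reachable_endo_node_id R' H'H) as Ehh'.
  pose proof (endo_node_id_wrap_id HH' Eh'h) as EhW'hW.
  pose proof (endo_node_id_wrap_id H'H Ehh') as EhWhW'.
  (* [hext h' hW' (h v) = inl v] forces [h v] to be a node, so the defaults
     [d], [d'] are never used. *)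
  destruct (node_nonempty M) as [d]; destruct (node_nonempty M') as [d'].
  set (f := fun v => match h v with inl u => u | inr _ => d' end).
  set (g := fun v => match h' v with inl u => u | inr _ => d end).
  assert (Hf : forall v, h v = inl (f v)).
  { intros v; generalize (Eh'h v); unfold f.
    destruct (h v); simpl; [reflexivity | discriminate]. }
  assert (Hg : forall v, h' v = inl (g v)).
  { intros v; generalize (Ehh' v); unfold g.
    destruct (h' v); simpl; [reflexivity | discriminate]. }
  exists f, g, hW, hW'.
  split; [|split; [|split; [exact EhW'hW|split; [exact EhWhW'|split]]]].
  - intros v; generalize (Eh'h v); simpl; rewrite Hf; simpl; rewrite Hg.
    now injection 1.
  - intros v; generalize (Ehh' v); simpl; rewrite Hg; simpl; rewrite Hf.
    now injection 1.
  - exact (is_hom_ext _ Hf H).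
  - exact (is_hom_ext _ Hg H').
Qed.

End Homomorphisms.

Theorem mainTheorem3 (S : Signature) :
  (forall M : Model S, wf_model M -> subsumes M M) /\
  (forall M1 M2 M3 : Model S, wf_model M1 -> wf_model M2 -> wf_model M3 ->
     subsumes M1 M2 -> subsumes M2 M3 -> subsumes M1 M3) /\
  (forall M M' : Model S, wf_model M -> wf_model M' ->
     subsumes M M' -> subsumes M' M -> isomorphic M M') /\
  (forall M M' : Model S, wf_model M -> wf_model M' ->
     isomorphic M M' -> subsumes M M' /\ subsumes M' M).
Proof.
  split; [|split; [|split]].
  - intros M _; apply subsumes_refl.
  - intros M1 M2 M3 _ _ _; apply subsumes_trans.
  - intros M M' [R _] [R' _]; exact (subsumes_antisym R R').
  - intros M M' _ _; apply isomorphic_subsumes.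
Qed.
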